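(* Let $B^\bullet=(B^{-1}\xrightarrow{d}B^0)$ and $G^\bullet=(G^{-1}\xrightarrow{d}G^0)$ be crossed modules and $\pi,\pi':B^\bullet\to G^\bullet$ homomorphisms of crossed modules. Let the strict 2-group $\mathfrak B=\operatorname{Cone}(B^\bullet)$ act on the underlying groupoid $\mathscr X$ of $\mathfrak G=\operatorname{Cone}(G^\bullet)$ via $x\mapsto \pi(b)\,x\,\pi'(b)^{-1}$. Identify $\pi_1(\mathfrak B)=H^{-1}(B^\bullet):=\operatorname{Ker}(B^{-1}\xrightarrow{d}B^0)$ and, for each $g\in G^0$, $\operatorname{Aut}_{\mathscr X}g=H^{-1}(G^\bullet):=\operatorname{Ker}(G^{-1}\xrightarrow{d}G^0)$. Then the homomorphism $\phi_g:H^{-1}(B^\bullet)\to H^{-1}(G^\bullet)$ induced by the action is $$\phi_g(\beta)=\pi(\beta)\cdot{}^{g}\pi'(\beta)^{-1}={}^{g}\pi'(\beta)^{-1}\cdot\pi(\beta),\qquad \beta\in H^{-1}(B^\bullet).$$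
   Context: A crossed module $G^\bullet$ consists of groups $G^0,G^{-1}$, an action of $G^0$ on $G^{-1}$ written $\gamma\mapsto{}^g\gamma$, and a homomorphism $d:G^{-1}\to G^0$ with $d({}^g\gamma)=g\,d(\gamma)g^{-1}$ and ${}^{d(\gamma)}\gamma'=\gamma\gamma'\gamma^{-1}$. A homomorphism of crossed modules is a pair of group homomorphisms in degrees $0$ and $-1$ commuting with $d$ and compatible with the actions. $\operatorname{Cone}(G^{-1}\xrightarrow{d}G^0)$ is the strict 2-group whose objects are the elements of $G^0$, with $\operatorname{Mor}(g,g')=\{\gamma\in G^{-1}: d(\gamma)g=g'\}$, composition given by multiplication in $G^{-1}$, tensor product of objects by multiplication in $G^0$, and tensor product of morphisms $\operatorname{Mor}(g_1,g_1')\times\operatorname{Mor}(g_2,g_2')\to\operatorname{Mor}(g_1g_2,g_1'g_2')$ given by $(\gamma_1,\gamma_2)\mapsto\gamma_1\cdot{}^{g_1}\gamma_2$. The pair $(\pi,\pi')$ gives a homomorphism of strict 2-groups $\mathfrak B\to\mathfrak G\times\mathfrak G$, and $\mathfrak G\times\mathfrak G$ acts on $\mathscr X$ by $(g,g')\cdot x=g\,x\,(g')^{-1}$. For a 2-group $\mathscr G$ acting on a groupoid $\mathscr X$, $\pi_1(\mathscr G)=\operatorname{Aut}(1_{\mathscr G})$, and $\phi_x:\pi_1(\mathscr G)\to\operatorname{Aut}_{\mathscr X}x$ sends an automorphism of the unit object to the induced automorphism of $1_{\mathscr G}\cdot x=x$. *)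

From HB Require Import structures.
From mathcomp Require Import ssreflect ssrfun ssrbool eqtype choice ssrnat seq.
From mathcomp Require Import monoid.

Set Implicit Arguments.
Unset Strict Implicit.
Unset Printing Implicit Defensive.

Local Open Scope group_scope.

Record crossed_module := CrossedModule {
  cm0 : groupType;
  cm1 : groupType;                       (* G^{-1} *)
  cm_d : cm1 -> cm0;
  cm_act : cm0 -> cm1 -> cm1;
  cm_dM : {morph cm_d : x y / x * y};
  cm_act1 : forall c : cm1, cm_act 1 c = c;
  cm_actM : forall (g h : cm0) (c : cm1), cm_act (g * h) c = cm_act g (cm_act h c);
  cm_act_mul : forall (g : cm0) (c c' : cm1),
      cm_act g (c * c') = cm_act g c * cm_act g c';
  cm_d_act : forall (g : cm0) (c : cm1), cm_d (cm_act g c) = g * cm_d c * g^-1;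
  cm_peiffer : forall c c' : cm1, cm_act (cm_d c) c' = c * c' * c^-1
}.

Arguments cm_d : clear implicits.
Arguments cm_act : clear implicits.

Record cm_hom (B G : crossed_module) := CmHom {
  hom0 : cm0 B -> cm0 G;
  hom1 : cm1 B -> cm1 G;
  hom0M : {morph hom0 : x y / x * y};
  hom1M : {morph hom1 : x y / x * y};
  hom_d : forall c : cm1 B, cm_d G (hom1 c) = hom0 (cm_d B c);
  hom_act : forall (b : cm0 B) (c : cm1 B),
      hom1 (cm_act B b c) = cm_act G (hom0 b) (hom1 c)
}.

(* Objects: elements of G^0.  Mor(g, g') = {gamma | d(gamma) g = g'}. *)
Definition cone_mor (G : crossed_module) (g g' : cm0 G) (c : cm1 G) : Prop :=
  cm_d G c * g = g'.

(* H^{-1}(G) = Ker d = Aut(1) = Aut(g) for every object g. *)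
Definition H_1 (G : crossed_module) (c : cm1 G) : Prop := cm_d G c = 1.

Definition cone_id (G : crossed_module) : cm1 G := 1.

(* Tensor product of morphisms  (gamma1 : g1 -> g1') (x) (gamma2 : g2 -> g2')
   = gamma1 . ^{g1} gamma2  : g1 g2 -> g1' g2'. *)
Definition cone_tensor_mor (G : crossed_module) (g1 : cm0 G) (c1 c2 : cm1 G)
  : cm1 G := c1 * cm_act G g1 c2.

(* Tensor inverse of a morphism gamma : g -> g', the unique morphism
   g^{-1} -> g'^{-1} with gamma (x) gamma^* = id_1 (strict 2-group inverse). *)
Definition cone_inv_mor (G : crossed_module) (g : cm0 G) (c : cm1 G) : cm1 G :=
  cm_act G g^-1 c^-1.

(* Action of Cone(G) x Cone(G) on the underlying groupoid X of Cone(G),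
   (g, g') . x = g x g'^{-1} = g (x) x (x) g'^{-1}.
   On objects: *)
Definition GG_act_obj (G : crossed_module) (g g' x : cm0 G) : cm0 G :=
  g * x * g'^-1.
(* On morphisms: (gamma1 : g1 -> g1', gamma2 : g2 -> g2') acting on
   gamma : x -> x' gives gamma1 (x) gamma (x) gamma2^*. *)
Definition GG_act_mor (G : crossed_module) (g1 : cm0 G) (c1 : cm1 G)
  (g2 : cm0 G) (c2 : cm1 G) (x : cm0 G) (c : cm1 G) : cm1 G :=
  cone_tensor_mor (g1 * x) (cone_tensor_mor g1 c1 c) (cone_inv_mor g2 c2).

Definition B_act_obj (B G : crossed_module) (pi pi' : cm_hom B G)
  (b : cm0 B) (x : cm0 G) : cm0 G :=
  GG_act_obj (hom0 pi b) (hom0 pi' b) x.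
Definition B_act_mor (B G : crossed_module) (pi pi' : cm_hom B G)
  (b : cm0 B) (beta : cm1 B) (x : cm0 G) (c : cm1 G) : cm1 G :=
  GG_act_mor (hom0 pi b) (hom1 pi beta) (hom0 pi' b) (hom1 pi' beta) x c.

(* phi_x : pi_1(B) = Aut(1_B) -> Aut_X(x): the automorphism of 1 . x = x
   induced by beta : 1 -> 1, i.e. the action of (beta, id_x). *)
Definition phi (B G : crossed_module) (pi pi' : cm_hom B G)
  (x : cm0 G) (beta : cm1 B) : cm1 G :=
  B_act_mor pi pi' 1 beta x (cone_id G).

From HB Require Import structures.
From mathcomp Require Import ssreflect ssrfun ssrbool eqtype choice ssrnat seq.
From mathcomp Require Import monoid.

(* At b = 1 the action on a morphism gamma of X is
   gamma |-> pi(beta) . ^g gamma . ^g pi'(beta)^{-1}, so evaluating at the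
   identity gamma = 1 gives the first formula.  The second follows because
   pi(beta) lies in Ker d, which is central in G^{-1} by the Peiffer identity. *)

Local Open Scope group_scope.

Lemma morph_mulg1 (T U : groupType) (f : T -> U) :
  {morph f : x y / x * y} -> f 1 = 1.
Proof. by move=> fM; apply: (@mulgI _ (f 1)); rewrite -fM !mulg1. Qed.

Lemma hom0_1 (B G : crossed_module) (p : cm_hom B G) : hom0 p 1 = 1.
Proof. exact: morph_mulg1 (hom0M p). Qed.

Lemma cm_actg1 (G : crossed_module) (g : cm0 G) : cm_act G g 1 = 1.
Proof. exact: morph_mulg1 (cm_act_mul g). Qed.

Lemma H_1_hom1 (B G : crossed_module) (p : cm_hom B G) (c : cm1 B) :
  H_1 c -> H_1 (hom1 p c).
Proof. by rewrite /H_1 hom_d => ->; apply: hom0_1. Qed.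

Lemma H_1_commute (G : crossed_module) (c c' : cm1 G) :
  H_1 c -> commute c c'.
Proof.
move=> dc1; have peiffer := cm_peiffer c c'; rewrite dc1 cm_act1 in peiffer.
by rewrite /commute {2}peiffer -!mulgA mulVg mulg1.
Qed.

Lemma phiE (B G : crossed_module) (pi pi' : cm_hom B G)
  (g : cm0 G) (beta : cm1 B) :
  phi pi pi' g beta = hom1 pi beta * cm_act G g (hom1 pi' beta)^-1.
Proof.
rewrite /phi /B_act_mor /GG_act_mor /cone_tensor_mor /cone_inv_mor /cone_id.
by rewrite !hom0_1 cm_actg1 mulg1 invg1 cm_act1 mul1g.
Qed.

Theorem lemma2p1 (B G : crossed_module) (pi pi' : cm_hom B G)
  (g : cm0 G) (beta : cm1 B) :
  H_1 beta ->
  phi pi pi' g beta = hom1 pi beta * cm_act G g (hom1 pi' beta)^-1 /\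
  phi pi pi' g beta = cm_act G g (hom1 pi' beta)^-1 * hom1 pi beta.
Proof.
move=> hbeta; rewrite phiE; split=> //.
exact/H_1_commute/H_1_hom1.
Qed.
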